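(* Let $X$ be a simplicial complex with vertex set $V$ and $1$-skeleton $\mathcal G$, and let $\hat d$ be a metric on $V$ such that for some constant $C>0$, $\hat d(u,v)\le C\,d_{\mathcal G}(u,v)$ for all $u,v\in V$. Define $\tilde d\colon X\times X\to\mathbb{R}$ by \[\tilde d(x,y)=\min\{\hat D(x,y),\,3C\,d_X(x,y)\}.\] Then $\tilde d$ is a metric on $X$. Moreover, if $x,y\in X$ have disjoint supports then $\tilde d(x,y)=\hat D(x,y)$; in particular $\tilde d(u,v)=\hat d(u,v)$ for all $u,v\in V$, so $\tilde d$ extends $\hat d$.
   Context: Points $x\in X$ have barycentric coordinates $(x_u)_{u\in V}$ (finitely many nonzero, summing to $1$); $\mathrm{supp}(x)=\{u\in V:x_u\neq0\}$. $\hat D(x,y)=\sum_{u,v\in V}x_uy_v\,\hat d(u,v)$ is the bilinear extension of $\hat d$. $d_{\mathcal G}$ is the word metric on the $1$-skeleton (every edge length $1$). For a simplex $\sigma$ and $x,y\in\sigma$, $d_\sigma(x,y)=\tfrac12\sum_{u\in V(\sigma)}|x_u-y_u|$; a path from $x$ to $y$ is a sequence $x=a_0,\dots,a_r=y$ with consecutive points in a common simplex $\sigma_i$, of length $\sum_i d_{\sigma_i}(a_{i-1},a_i)$; the $\ell^1$-path metric $d_X(x,y)$ is the infimum of lengths of such paths. *)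

From Stdlib Require Import Reals Lra List ClassicalEpsilon.
Import ListNotations.
Open Scope R_scope.

Set Implicit Arguments.

(* Abstract simplicial complex on vertex set V: faces are finite nonempty
   vertex lists, closed under nonempty sub-lists (as sets), every vertex
   spans a 0-simplex. *)
Record SimplicialComplex (V : Type) := {
  face : list V -> Prop;
  face_nonempty : forall s, face s -> s <> [];
  face_sub : forall s t, face t -> incl s t -> s <> [] -> face s;
  face_vertex : forall v, face [v]
}.

Definition sumL {V : Type} (s : list V) (f : V -> R) : R :=
  fold_right (fun u acc => f u + acc) 0 s.

Definition supported {V : Type} (x : V -> R) (s : list V) : Prop :=
  forall u, x u <> 0 -> In u s.

(* points of the geometric realisation X: barycentric coordinate functions,
   nonnegative, finitely supported on a simplex, summing to 1 *)
Definition inX {V : Type} (K : SimplicialComplex V) (x : V -> R) : Prop :=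
  exists s, face K s /\ NoDup s /\ supported x s /\
    (forall u, 0 <= x u) /\ sumL s x = 1.

Definition is_metric_on {T : Type} (P : T -> Prop) (d : T -> T -> R) : Prop :=
  (forall x y, P x -> P y -> 0 <= d x y) /\
  (forall x y, P x -> P y -> (d x y = 0 <-> x = y)) /\
  (forall x y, P x -> P y -> d x y = d y x) /\
  (forall x y z, P x -> P y -> P z -> d x z <= d x y + d y z).

Inductive walk {V : Type} (K : SimplicialComplex V) : V -> V -> nat -> Prop :=
| walk_nil u : walk K u u 0
| walk_cons u w v n : face K [u; w] -> walk K w v n -> walk K u v (S n).

(* d_G(u,v) = n (word metric in the 1-skeleton, finite case) *)
Definition dG_is {V : Type} (K : SimplicialComplex V) (u v : V) (n : nat) : Prop :=
  walk K u v n /\ (forall m, walk K u v m -> (n <= m)%nat).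

Definition dsum {V : Type} (dh : V -> V -> R) (s : list V) (x y : V -> R) : R :=
  sumL s (fun u => sumL s (fun v => x u * y v * dh u v)).

(* bilinear extension \hat D(x,y) = sum_{u,v in V} x_u y_v dh(u,v), computed
   over any duplicate-free list covering both supports *)
Definition Dhat {V : Type} (dh : V -> V -> R) (x y : V -> R) : R :=
  epsilon (inhabits 0) (fun r => exists s, NoDup s /\ supported x s /\
           supported y s /\ r = dsum dh s x y).

Definition dsig {V : Type} (s : list V) (x y : V -> R) : R :=
  / 2 * sumL s (fun u => Rabs (x u - y u)).

(* pathlen K x z L : there is a path x = a_0, ..., a_r = z in X of length L,
   consecutive points lying in a common simplex *)
Inductive pathlen {V : Type} (K : SimplicialComplex V) :
  (V -> R) -> (V -> R) -> R -> Prop :=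
| path_nil x : inX K x -> pathlen K x x 0
| path_cons x y z s L :
    face K s -> NoDup s -> inX K x -> inX K y ->
    supported x s -> supported y s ->
    pathlen K y z L -> pathlen K x z (dsig s x y + L).

Definition is_inf (E : R -> Prop) (m : R) : Prop :=
  (forall r, E r -> m <= r) /\ (forall b, (forall r, E r -> b <= r) -> b <= m).

(* l^1 path metric: Some (infimum of path lengths), or None (= +infinity)
   when no path exists *)
Definition dX {V : Type} (K : SimplicialComplex V) (x y : V -> R) : option R :=
  if excluded_middle_informative (exists L, pathlen K x y L)
  then Some (epsilon (inhabits 0) (is_inf (pathlen K x y)))
  else None.

(* \tilde d(x,y) = min { \hat D(x,y), 3 C d_X(x,y) }  (min with +infinity
   is \hat D) *)
Definition dtilde {V : Type} (K : SimplicialComplex V) (dh : V -> V -> R) (C : R)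
  (x y : V -> R) : R :=
  match dX K x y with
  | Some r => Rmin (Dhat dh x y) (3 * C * r)
  | None => Dhat dh x y
  end.

Definition vertex_pt {V : Type} (u : V) : V -> R :=
  fun w => if excluded_middle_informative (w = u) then 1 else 0.

From Stdlib Require Import Reals Lra Lia List Permutation ClassicalEpsilon FunctionalExtensionality.
Import ListNotations.
Open Scope R_scope.

(* d̃(x,y) is the greatest lower bound of D̂(x,y) and of 3C·L for the lengths
   L of paths from x to y (dtilde_glb), and it lies below each of these
   quantities.  Every axiom is obtained by feeding suitable bounds to this
   greatest-lower-bound property, using four facts:
   - D̂ restricted to X is symmetric, satisfies the triangle inequality
     (average the triangle inequality of d̂ with weights x_u y_v z_w) and
     separates points (Dhat_pos);
   - every simplex has d̂-diameter at most C, so D̂(x,x) ≤ C and D̂(x,·) is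
     2C-Lipschitz along paths (Dhat_path);
   - functionals Σ g_u x_u with 0 ≤ g ≤ 1 are 1-Lipschitz along paths, so
     path length bounds every coordinate difference and is at least 1 between
     points with disjoint supports;
   - path lengths are nonnegative, and paths reverse and concatenate. *)

Section FiniteSums.
Context {V : Type}.
Implicit Types (s t : list V) (f g : V -> R).

Lemma sumL_nil f : sumL [] f = 0.
Proof. reflexivity. Qed.

Lemma sumL_cons a s f : sumL (a :: s) f = f a + sumL s f.
Proof. reflexivity. Qed.

Lemma sumL_ext s f g : (forall u, In u s -> f u = g u) -> sumL s f = sumL s g.
Proof.
  induction s as [|a s IH]; intros H; rewrite ?sumL_nil, ?sumL_cons; [reflexivity|].
  rewrite (H a (in_eq a s)), IH; [reflexivity|]. intros u Hu; apply H, in_cons, Hu.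
Qed.

Lemma sumL_plus s f g : sumL s (fun u => f u + g u) = sumL s f + sumL s g.
Proof. induction s as [|a s IH]; rewrite ?sumL_nil, ?sumL_cons; [|rewrite IH]; ring. Qed.

Lemma sumL_minus s f g : sumL s (fun u => f u - g u) = sumL s f - sumL s g.
Proof. induction s as [|a s IH]; rewrite ?sumL_nil, ?sumL_cons; [|rewrite IH]; ring. Qed.

Lemma sumL_scal s c f : sumL s (fun u => c * f u) = c * sumL s f.
Proof. induction s as [|a s IH]; rewrite ?sumL_nil, ?sumL_cons; [|rewrite IH]; ring. Qed.

Lemma sumL_le s f g : (forall u, In u s -> f u <= g u) -> sumL s f <= sumL s g.
Proof.
  induction s as [|a s IH]; intros H; rewrite ?sumL_nil, ?sumL_cons; [lra|].
  apply Rplus_le_compat; [apply H, in_eq | apply IH; intros u Hu; apply H, in_cons, Hu].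
Qed.

Lemma sumL_nonneg s f : (forall u, In u s -> 0 <= f u) -> 0 <= sumL s f.
Proof.
  intros H. rewrite <- (sumL_nil f) at 1.
  induction s as [|a s IH]; rewrite ?sumL_nil, ?sumL_cons; [lra|].
  rewrite sumL_nil in IH.
  apply Rplus_le_le_0_compat; [apply H, in_eq | apply IH; intros u Hu; apply H, in_cons, Hu].
Qed.

Lemma sumL_abs s f : Rabs (sumL s f) <= sumL s (fun u => Rabs (f u)).
Proof.
  induction s as [|a s IH]; rewrite ?sumL_nil, ?sumL_cons; [rewrite Rabs_R0; lra|].
  eapply Rle_trans; [apply Rabs_triang | lra].
Qed.

Lemma sumL_swap s t (F : V -> V -> R) :
  sumL s (fun u => sumL t (fun v => F u v)) = sumL t (fun v => sumL s (fun u => F u v)).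
Proof.
  induction s as [|a s IH].
  - rewrite sumL_nil, (sumL_ext t _ (fun _ => 0 * 0)) by (intros; rewrite sumL_nil; ring).
    rewrite sumL_scal; ring.
  - rewrite sumL_cons, IH, <- sumL_plus. apply sumL_ext; intros v _. reflexivity.
Qed.

Lemma sumL_nonneg_zero s f u :
  (forall v, In v s -> 0 <= f v) -> sumL s f = 0 -> In u s -> f u = 0.
Proof.
  induction s as [|a s IH]; intros Hpos Hsum Hu; [destruct Hu|].
  rewrite sumL_cons in Hsum.
  assert (Ha : 0 <= f a) by apply Hpos, in_eq.
  assert (Hs : 0 <= sumL s f) by (apply sumL_nonneg; intros v Hv; apply Hpos, in_cons, Hv).
  destruct Hu as [<-|Hu]; [lra|].
  apply IH; auto; [intros v Hv; apply Hpos, in_cons, Hv | lra].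
Qed.

Lemma sumL_perm s t f : Permutation s t -> sumL s f = sumL t f.
Proof. induction 1; rewrite ?sumL_cons; lra. Qed.

Definition nonzero f (u : V) : bool := if Req_EM_T (f u) 0 then false else true.

Lemma sumL_drop_zeros s f : sumL (filter (nonzero f) s) f = sumL s f.
Proof.
  induction s as [|a s IH]; [reflexivity|]. cbn [filter]. unfold nonzero at 1.
  destruct (Req_EM_T (f a) 0) as [E|E]; rewrite ?sumL_cons, IH; [rewrite E|]; ring.
Qed.

Lemma sumL_cover s t f : NoDup s -> NoDup t ->
  (forall u, f u <> 0 -> In u s /\ In u t) -> sumL s f = sumL t f.
Proof.
  intros Ns Nt H. rewrite <- (sumL_drop_zeros s), <- (sumL_drop_zeros t).
  apply sumL_perm, NoDup_Permutation; try apply NoDup_filter; auto.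
  intros u. rewrite !filter_In. unfold nonzero.
  destruct (Req_EM_T (f u) 0) as [|E]; [split; intros [_ F]; discriminate|].
  specialize (H u E). tauto.
Qed.

Lemma sumL_oscillation (s : list V) (a b f : V -> R) (m c : R) :
  sumL s a = sumL s b -> (forall v, In v s -> Rabs (f v - m) <= c) ->
  sumL s (fun v => b v * f v)
    <= sumL s (fun v => a v * f v) + c * sumL s (fun v => Rabs (a v - b v)).
Proof.
  intros Hmass Hosc.
  assert (E : sumL s (fun v => b v * f v) - sumL s (fun v => a v * f v)
              = sumL s (fun v => (b v - a v) * (f v - m))).
  { rewrite <- sumL_minus.
    transitivity (sumL s (fun v => (b v - a v) * (f v - m) + m * (b v - a v))).
    - apply sumL_ext; intros; ring.
    - rewrite sumL_plus, sumL_scal, sumL_minus, Hmass; ring. }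
  assert (Hle : sumL s (fun v => (b v - a v) * (f v - m))
                <= sumL s (fun v => c * Rabs (a v - b v))).
  { apply sumL_le; intros v Hv. eapply Rle_trans; [apply Rle_abs|].
    rewrite Rabs_mult, Rabs_minus_sym, Rmult_comm.
    apply Rmult_le_compat_r; [apply Rabs_pos | apply Hosc, Hv]. }
  rewrite sumL_scal in Hle. lra.
Qed.

End FiniteSums.

Lemma nodup_cover {V : Type} (s : list V) : exists t, NoDup t /\ incl s t.
Proof.
  exists (nodup (fun a b => excluded_middle_informative (a = b)) s).
  split; [apply NoDup_nodup | intros a Ha; apply nodup_In, Ha].
Qed.

Section PointsOfX.
Context {V : Type} (K : SimplicialComplex V).
Implicit Types (x y z : V -> R) (s t : list V).

Lemma inX_nonneg x : inX K x -> forall u, 0 <= x u.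
Proof. intros (s & _ & _ & _ & Hpos & _); exact Hpos. Qed.

Lemma inX_sum x s : inX K x -> NoDup s -> supported x s -> sumL s x = 1.
Proof.
  intros (t & _ & Nt & Sxt & _ & Ht) Ns Sxs. rewrite <- Ht.
  apply sumL_cover; [exact Ns | exact Nt |].
  intros u Hu; split; [apply Sxs | apply Sxt]; exact Hu.
Qed.

Lemma inX_concentrated x w : inX K x -> (forall v, x v <> 0 -> v = w) -> x w = 1.
Proof.
  intros Hx Hw. rewrite <- (inX_sum x [w] Hx).
  - rewrite sumL_cons, sumL_nil; ring.
  - constructor; [intros [] | constructor].
  - intros v Hv; left; symmetry; apply Hw, Hv.
Qed.

Lemma inX_cover x s0 : inX K x -> exists s, NoDup s /\ supported x s /\ incl s0 s.
Proof.
  intros (t & _ & _ & Sxt & _).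
  destruct (nodup_cover (t ++ s0)) as (s & Ns & Hs). exists s; repeat split; auto.
  - intros u Hu; apply Hs, in_or_app; left; apply Sxt, Hu.
  - intros u Hu; apply Hs, in_or_app; right; exact Hu.
Qed.

Lemma inX_cover2 x y : inX K x -> inX K y ->
  exists s, NoDup s /\ supported x s /\ supported y s.
Proof.
  intros Hx Hy. destruct Hx as (t & _ & _ & Sxt & _).
  destruct (inX_cover y t Hy) as (s & Ns & Sys & Hts).
  exists s; repeat split; auto. intros u Hu; apply Hts, Sxt, Hu.
Qed.

Lemma inX_cover3 x y z : inX K x -> inX K y -> inX K z ->
  exists s, NoDup s /\ supported x s /\ supported y s /\ supported z s.
Proof.
  intros Hx Hy Hz. destruct (inX_cover2 x y Hx Hy) as (t & _ & Sxt & Syt).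
  destruct (inX_cover z t Hz) as (s & Ns & Szs & Hts).
  exists s; repeat split; auto; intros u Hu; apply Hts; [apply Sxt | apply Syt]; exact Hu.
Qed.

Lemma vertex_inX u : inX K (vertex_pt u).
Proof.
  exists [u]; repeat split.
  - apply face_vertex.
  - constructor; [intros [] | constructor].
  - intros w Hw. unfold vertex_pt in Hw.
    destruct excluded_middle_informative as [->|]; [left; reflexivity | lra].
  - intros w. unfold vertex_pt. destruct excluded_middle_informative; lra.
  - rewrite sumL_cons, sumL_nil. unfold vertex_pt.
    destruct excluded_middle_informative; [ring | congruence].
Qed.

End PointsOfX.

Section BilinearExtension.
Context {V : Type} (dh : V -> V -> R).
Implicit Types (x y z : V -> R) (s t : list V).

Lemma dsum_cover s t x y : NoDup s -> NoDup t ->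
  supported x s -> supported y s -> supported x t -> supported y t ->
  dsum dh s x y = dsum dh t x y.
Proof.
  intros Ns Nt Sxs Sys Sxt Syt. unfold dsum.
  transitivity (sumL s (fun u => sumL t (fun v => x u * y v * dh u v))).
  - apply sumL_ext; intros u _. apply sumL_cover; [exact Ns | exact Nt |].
    intros v Hv. assert (Hy : y v <> 0) by (intros E; apply Hv; rewrite E; ring).
    split; [apply Sys | apply Syt]; exact Hy.
  - apply sumL_cover; [exact Ns | exact Nt |]. intros u Hu.
    assert (Hx : x u <> 0).
    { intros E; apply Hu. rewrite (sumL_ext t _ (fun _ => 0 * 0)) by (intros; rewrite E; ring).
      rewrite sumL_scal; ring. }
    split; [apply Sxs | apply Sxt]; exact Hx.
Qed.

Lemma Dhat_eq s x y : NoDup s -> supported x s -> supported y s ->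
  Dhat dh x y = dsum dh s x y.
Proof.
  intros Ns Sx Sy. unfold Dhat.
  destruct (epsilon_spec (inhabits 0) (fun r => exists s, NoDup s /\ supported x s /\
              supported y s /\ r = dsum dh s x y)) as (t & Nt & Sxt & Syt & ->).
  - exists (dsum dh s x y), s; auto.
  - apply dsum_cover; assumption.
Qed.

(* Triple sums, used to compare the three double sums of a triangle. *)
Definition tsum s (F : V -> V -> V -> R) : R :=
  sumL s (fun u => sumL s (fun v => sumL s (fun w => F u v w))).

Lemma tsum_ext s F G : (forall u v w, F u v w = G u v w) -> tsum s F = tsum s G.
Proof.
  intros H. unfold tsum.
  apply sumL_ext; intros u _; apply sumL_ext; intros v _; apply sumL_ext; intros w _; apply H.
Qed.

Lemma tsum_plus s F G : tsum s (fun u v w => F u v w + G u v w) = tsum s F + tsum s G.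
Proof.
  unfold tsum. rewrite <- sumL_plus. apply sumL_ext; intros u _.
  rewrite <- sumL_plus. apply sumL_ext; intros v _. apply sumL_plus.
Qed.

Lemma tsum_le s F G : (forall u v w, F u v w <= G u v w) -> tsum s F <= tsum s G.
Proof.
  intros H. unfold tsum.
  apply sumL_le; intros u _; apply sumL_le; intros v _; apply sumL_le; intros w _; apply H.
Qed.

Lemma tsum_swap12 s F : tsum s F = tsum s (fun v u w => F u v w).
Proof. exact (sumL_swap s s (fun u v => sumL s (fun w => F u v w))). Qed.

Lemma tsum_swap23 s F : tsum s F = tsum s (fun u w v => F u v w).
Proof. unfold tsum. apply sumL_ext; intros u _. apply sumL_swap. Qed.

Lemma dsum_lift s x y z : sumL s z = 1 ->
  dsum dh s x y = tsum s (fun u v w => x u * y v * z w * dh u v).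
Proof.
  intros Hz. unfold dsum, tsum. apply sumL_ext; intros u _; apply sumL_ext; intros v _.
  transitivity (sumL s (fun w => x u * y v * dh u v * z w)).
  - rewrite sumL_scal, Hz; ring.
  - apply sumL_ext; intros; ring.
Qed.

Hypothesis Hdh : is_metric_on (fun _ : V => True) dh.

Lemma dh_nonneg u v : 0 <= dh u v.
Proof. exact (proj1 Hdh u v I I). Qed.

Lemma dh_triangle u v w : dh u w <= dh u v + dh v w.
Proof. exact (proj2 (proj2 (proj2 Hdh)) u v w I I I). Qed.

Lemma dh_reverse_triangle u v w : Rabs (dh u v - dh u w) <= dh v w.
Proof.
  destruct Hdh as (_ & _ & Hsym & _).
  pose proof (dh_triangle u w v). pose proof (dh_triangle u v w).
  rewrite (Hsym w v I I) in *. apply Rabs_le; lra.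
Qed.

Section OnX.
Context (K : SimplicialComplex V).

Lemma Dhat_nonneg x y : inX K x -> inX K y -> 0 <= Dhat dh x y.
Proof.
  intros Hx Hy. destruct (inX_cover2 K x y Hx Hy) as (s & Ns & Sx & Sy).
  rewrite (Dhat_eq s) by assumption. unfold dsum.
  apply sumL_nonneg; intros u _; apply sumL_nonneg; intros v _.
  apply Rmult_le_pos; [apply Rmult_le_pos; eapply inX_nonneg; eassumption | apply dh_nonneg].
Qed.

Lemma Dhat_sym x y : inX K x -> inX K y -> Dhat dh x y = Dhat dh y x.
Proof.
  intros Hx Hy. destruct (inX_cover2 K x y Hx Hy) as (s & Ns & Sx & Sy).
  rewrite !(Dhat_eq s) by assumption. unfold dsum. rewrite sumL_swap.
  apply sumL_ext; intros u _; apply sumL_ext; intros v _.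
  rewrite (proj1 (proj2 (proj2 Hdh)) v u I I); ring.
Qed.

(* Triangle inequality for D̂: average the triangle inequality of d̂ with
   weights x_u y_v z_w. *)
Lemma Dhat_triangle x y z : inX K x -> inX K y -> inX K z ->
  Dhat dh x z <= Dhat dh x y + Dhat dh y z.
Proof.
  intros Hx Hy Hz. destruct (inX_cover3 K x y z Hx Hy Hz) as (s & Ns & Sx & Sy & Sz).
  rewrite !(Dhat_eq s) by assumption.
  assert (Exy : dsum dh s x y = tsum s (fun u v w => x u * y v * z w * dh u v))
    by (apply dsum_lift, (inX_sum K); assumption).
  assert (Exz : dsum dh s x z = tsum s (fun u v w => x u * y v * z w * dh u w)).
  { rewrite (dsum_lift s x z y), tsum_swap23 by (apply (inX_sum K); assumption).
    apply tsum_ext; intros; ring. }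
  assert (Eyz : dsum dh s y z = tsum s (fun u v w => x u * y v * z w * dh v w)).
  { rewrite (dsum_lift s y z x), tsum_swap23, tsum_swap12 by (apply (inX_sum K); assumption).
    apply tsum_ext; intros; ring. }
  rewrite Exy, Exz, Eyz, <- tsum_plus. apply tsum_le; intros u v w.
  rewrite <- Rmult_plus_distr_l. apply Rmult_le_compat_l; [|apply dh_triangle].
  repeat apply Rmult_le_pos; eapply inX_nonneg; eassumption.
Qed.

(* D̂ separates points: if D̂(x,y) = 0 then any u in supp x and v in supp y
   have d̂(u,v) = 0, so both points are the same vertex. *)
Lemma Dhat_pos x y : inX K x -> inX K y -> x <> y -> 0 < Dhat dh x y.
Proof.
  intros Hx Hy Hne. destruct (Rle_lt_or_eq_dec _ _ (Dhat_nonneg x y Hx Hy)) as [|Hzero];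
    [assumption | exfalso; apply Hne].
  destruct (inX_cover2 K x y Hx Hy) as (s & Ns & Sx & Sy).
  rewrite (Dhat_eq s) in Hzero by assumption. unfold dsum in Hzero.
  assert (Hw : forall u v, 0 <= x u * y v * dh u v).
  { intros u v. apply Rmult_le_pos; [apply Rmult_le_pos; eapply inX_nonneg; eassumption
                                        | apply dh_nonneg]. }
  assert (Hsame : forall u v, x u <> 0 -> y v <> 0 -> u = v).
  { intros u v Hu Hv. apply (proj1 (proj2 Hdh) u v I I).
    assert (Hrow : sumL s (fun v => x u * y v * dh u v) = 0).
    { apply (sumL_nonneg_zero s (fun u => sumL s (fun v => x u * y v * dh u v)));
        [intros; apply sumL_nonneg; intros; apply Hw | symmetry; exact Hzero | apply Sx, Hu]. }
    pose proof (sumL_nonneg_zero s _ v (fun v _ => Hw u v) Hrow (Sy v Hv)) as Hterm.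
    destruct (Rmult_integral _ _ Hterm) as [Hxy|]; [|assumption].
    destruct (Rmult_integral _ _ Hxy); contradiction. }
  apply functional_extensionality; intros w.
  assert (Hy_one : x w <> 0 -> y w = 1)
    by (intros Hxw; apply (inX_concentrated K); [|intros v Hv; symmetry]; auto).
  assert (Hx_one : y w <> 0 -> x w = 1)
    by (intros Hyw; apply (inX_concentrated K); auto).
  destruct (Req_dec (x w) 0) as [Ex|Ex].
  - destruct (Req_dec (y w) 0) as [Ey|Ey]; [lra | specialize (Hx_one Ey); lra].
  - rewrite (Hy_one Ex), Hx_one; [reflexivity | rewrite (Hy_one Ex); lra].
Qed.

End OnX.
End BilinearExtension.

Section Paths.
Context {V : Type} (K : SimplicialComplex V).
Implicit Types (x y z a b : V -> R) (s A : list V).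

Lemma dsig_nonneg s x y : 0 <= dsig s x y.
Proof.
  unfold dsig. apply Rmult_le_pos; [lra|]. apply sumL_nonneg; intros; apply Rabs_pos.
Qed.

Lemma dsig_sym s x y : dsig s x y = dsig s y x.
Proof. unfold dsig. f_equal. apply sumL_ext; intros; apply Rabs_minus_sym. Qed.

Lemma path_ends x y L : pathlen K x y L -> inX K x /\ inX K y.
Proof. induction 1; tauto. Qed.

Lemma path_nonneg x y L : pathlen K x y L -> 0 <= L.
Proof. induction 1; [lra | pose proof (dsig_nonneg s x y); lra]. Qed.

Lemma path_app x y z L1 L2 :
  pathlen K x y L1 -> pathlen K y z L2 -> pathlen K x z (L1 + L2).
Proof.
  induction 1 as [x Hx | x y' z' s L Fs Ns Hx Hy Sx Sy _ IH]; intros Hyz.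
  - rewrite Rplus_0_l; exact Hyz.
  - rewrite Rplus_assoc. econstructor; eauto.
Qed.

Lemma path_rev x y L : pathlen K x y L -> pathlen K y x L.
Proof.
  induction 1 as [x Hx | x y z s L Fs Ns Hx Hy Sx Sy _ IH]; [constructor; exact Hx|].
  rewrite Rplus_comm, <- (Rplus_0_r (dsig s x y)), dsig_sym.
  apply (path_app z y x); [exact IH|]. econstructor; eauto. constructor; exact Hx.
Qed.

(* Functionals x ↦ Σ_{u∈A} g_u x_u with 0 ≤ g ≤ 1 are 1-Lipschitz for d_σ
   on each simplex σ: recentre g at 1/2, using that a and b have equal mass. *)
Lemma step_functional A g s a b : NoDup A -> NoDup s -> inX K a -> inX K b ->
  supported a s -> supported b s -> (forall u, 0 <= g u <= 1) ->
  Rabs (sumL A (fun u => g u * a u) - sumL A (fun u => g u * b u)) <= dsig s a b.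
Proof.
  intros NA Ns Ha Hb Sa Sb Hg.
  set (th := fun u => if excluded_middle_informative (In u A) then g u else 0).
  assert (Hth : forall u, 0 <= th u <= 1)
    by (intros u; unfold th; destruct excluded_middle_informative; [apply Hg | lra]).
  assert (E : sumL A (fun u => g u * a u) - sumL A (fun u => g u * b u)
              = sumL s (fun u => th u * (a u - b u))).
  { rewrite <- sumL_minus. transitivity (sumL A (fun u => th u * (a u - b u))).
    - apply sumL_ext; intros u Hu. unfold th.
      destruct excluded_middle_informative; [ring | contradiction].
    - apply sumL_cover; [exact NA | exact Ns |]. intros u Hu. split.
      + unfold th in Hu. destruct excluded_middle_informative; [assumption | lra].
      + destruct (Req_dec (a u) 0) as [Ea|Ea]; [|apply Sa, Ea].
        destruct (Req_dec (b u) 0) as [Eb|Eb]; [|apply Sb, Eb].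
        rewrite Ea, Eb in Hu; lra. }
  assert (Hmass : sumL s (fun u => a u - b u) = 0)
    by (rewrite sumL_minus, (inX_sum K a s), (inX_sum K b s); auto; ring).
  assert (Ecentre : sumL s (fun u => th u * (a u - b u))
                    = sumL s (fun u => (th u - /2) * (a u - b u))).
  { transitivity (sumL s (fun u => th u * (a u - b u) - /2 * (a u - b u))).
    - rewrite sumL_minus, sumL_scal, Hmass; ring.
    - apply sumL_ext; intros; ring. }
  rewrite E, Ecentre. eapply Rle_trans; [apply sumL_abs|].
  unfold dsig. rewrite <- sumL_scal. apply sumL_le; intros u _.
  rewrite Rabs_mult. apply Rmult_le_compat_r; [apply Rabs_pos|].
  specialize (Hth u). apply Rabs_le; lra.
Qed.

Lemma path_functional A g x y L : NoDup A -> (forall u, 0 <= g u <= 1) ->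
  pathlen K x y L ->
  Rabs (sumL A (fun u => g u * x u) - sumL A (fun u => g u * y u)) <= L.
Proof.
  intros NA Hg.
  induction 1 as [x Hx | x y z s L Fs Ns Hx Hy Sx Sy _ IH].
  - unfold Rminus; rewrite Rplus_opp_r, Rabs_R0; lra.
  - pose proof (step_functional A g s x y NA Ns Hx Hy Sx Sy Hg) as Hstep.
    pose proof (Rabs_triang (sumL A (fun u => g u * x u) - sumL A (fun u => g u * y u))
                            (sumL A (fun u => g u * y u) - sumL A (fun u => g u * z u))).
    replace (sumL A (fun u => g u * x u) - sumL A (fun u => g u * y u)
             + (sumL A (fun u => g u * y u) - sumL A (fun u => g u * z u)))
      with (sumL A (fun u => g u * x u) - sumL A (fun u => g u * z u)) in * by ring.
    lra.
Qed.

Lemma path_coord x y L w : pathlen K x y L -> Rabs (x w - y w) <= L.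
Proof.
  intros HL. pose proof (path_functional [w] (fun _ => 1) x y L) as H.
  rewrite !sumL_cons, !sumL_nil in H.
  replace (x w - y w) with (1 * x w + 0 - (1 * y w + 0)) by ring.
  apply H; [constructor; [intros [] | constructor] | intros; lra | exact HL].
Qed.

Lemma path_disjoint x y L : pathlen K x y L ->
  (forall u, x u <> 0 -> y u = 0) -> 1 <= L.
Proof.
  intros HL Hdisj. destruct (path_ends x y L HL) as [Hx _].
  destruct Hx as (s & Fs & Ns & Sx & Hpos & Hsum).
  set (g := fun u => if excluded_middle_informative (x u <> 0) then 1 else 0).
  pose proof (path_functional s g x y L Ns) as H.
  assert (E1 : sumL s (fun u => g u * x u) = 1).
  { rewrite <- Hsum. apply sumL_ext; intros u _. unfold g.
    destruct excluded_middle_informative as [|Hz]; [ring|].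
    destruct (Req_dec (x u) 0) as [E|]; [rewrite E; ring | contradiction]. }
  assert (E0 : sumL s (fun u => g u * y u) = 0).
  { rewrite (sumL_ext s _ (fun _ => 0 * 0)), sumL_scal; [ring|]. intros u _. unfold g.
    destruct excluded_middle_informative as [Hu|]; [rewrite (Hdisj u Hu)|]; ring. }
  rewrite E1, E0, Rminus_0_r, Rabs_R1 in H. apply H; [|exact HL].
  intros u; unfold g; destruct excluded_middle_informative; lra.
Qed.

End Paths.

Section Lipschitz.
Context {V : Type} (K : SimplicialComplex V) (dh : V -> V -> R) (C : R).
Hypothesis Hdh : is_metric_on (fun _ : V => True) dh.
Hypothesis HC : 0 < C.
Hypothesis Hlip : forall u v n, dG_is K u v n -> dh u v <= C * INR n.
Implicit Types (x y a b : V -> R) (s T : list V).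

(* Two vertices of a common simplex are at graph distance at most 1, so
   every simplex has d̂-diameter at most C. *)
Lemma face_diam s u v : face K s -> In u s -> In v s -> dh u v <= C.
Proof.
  intros Fs Hu Hv. destruct (classic (u = v)) as [<-|Hne].
  - rewrite (proj2 (proj1 (proj2 Hdh) u u I I) eq_refl); lra.
  - assert (Fuv : face K [u; v]).
    { apply (face_sub K) with s; [exact Fs | | discriminate].
      intros w [<-|[<-|[]]]; assumption. }
    replace C with (C * INR 1) by (simpl; ring). apply Hlip. split.
    + econstructor; [exact Fuv | constructor].
    + intros m Hm. inversion Hm; subst; [contradiction | lia].
Qed.

(* D̂(x,x) ≤ C, as x lives in a single simplex. *)
Lemma Dhat_self_le x : inX K x -> Dhat dh x x <= C.
Proof.
  intros Hx. pose proof Hx as (s & Fs & Ns & Sx & Hpos & Hsum).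
  rewrite (Dhat_eq dh s) by assumption. unfold dsum.
  apply Rle_trans with (sumL s (fun u => sumL s (fun v => C * (x u * x v)))).
  - apply sumL_le; intros u Hu; apply sumL_le; intros v Hv.
    rewrite (Rmult_comm C). apply Rmult_le_compat_l;
      [apply Rmult_le_pos; apply Hpos | apply (face_diam s); assumption].
  - rewrite (sumL_ext s _ (fun u => C * x u)), sumL_scal, Hsum; [lra|].
    intros u _. rewrite sumL_scal, sumL_scal, Hsum; ring.
Qed.

Lemma Dhat_rows T s x a : NoDup T -> NoDup s -> incl s T -> supported x T -> supported a s ->
  Dhat dh x a = sumL T (fun u => x u * sumL s (fun v => a v * dh u v)).
Proof.
  intros NT Ns Hs Sx Sa. rewrite (Dhat_eq dh T); [|assumption..|intros u Hu; apply Hs, Sa, Hu].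
  unfold dsum. apply sumL_ext; intros u _. rewrite <- sumL_scal.
  transitivity (sumL T (fun v => x u * (a v * dh u v))); [apply sumL_ext; intros; ring|].
  apply sumL_cover; [exact NT | exact Ns |]. intros v Hv.
  assert (Ha : a v <> 0) by (intros E; apply Hv; rewrite E; ring).
  split; [apply Hs|]; apply Sa, Ha.
Qed.

Lemma Dhat_step x s a b : inX K x -> face K s -> NoDup s -> inX K a -> inX K b ->
  supported a s -> supported b s ->
  Dhat dh x b <= Dhat dh x a + 2 * C * dsig s a b.
Proof.
  intros Hx Fs Ns Ha Hb Sa Sb.
  destruct (inX_cover K x s Hx) as (T & NT & Sx & Hs).
  rewrite (Dhat_rows T s x a), (Dhat_rows T s x b) by assumption.
  destruct s as [|v0 s']; [exfalso; exact (face_nonempty K Fs eq_refl)|].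
  (* on σ, d̂(u,·) oscillates by at most C around d̂(u,v0) *)
  assert (Hrow : forall u, sumL (v0 :: s') (fun v => b v * dh u v)
      <= sumL (v0 :: s') (fun v => a v * dh u v) + 2 * C * dsig (v0 :: s') a b).
  { intros u. unfold dsig.
    replace (2 * C * (/ 2 * _)) with (C * sumL (v0 :: s') (fun v => Rabs (a v - b v))) by field.
    apply sumL_oscillation with (m := dh u v0).
    - rewrite (inX_sum K a), (inX_sum K b); auto.
    - intros v Hv. eapply Rle_trans; [apply dh_reverse_triangle; exact Hdh|].
      apply (face_diam (v0 :: s')); [exact Fs | exact Hv | apply in_eq]. }
  eapply Rle_trans with (sumL T (fun u => x u * sumL (v0 :: s') (fun v => a v * dh u v)
                                       + x u * (2 * C * dsig (v0 :: s') a b))).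
  - apply sumL_le; intros u _. rewrite <- Rmult_plus_distr_l.
    apply Rmult_le_compat_l; [apply (inX_nonneg K x Hx) | apply Hrow].
  - set (e := 2 * C * dsig (v0 :: s') a b).
    rewrite sumL_plus, (sumL_ext T (fun u => x u * e) (fun u => e * x u)) by (intros; ring).
    rewrite sumL_scal, (inX_sum K x T) by assumption. lra.
Qed.

Lemma Dhat_path x a b L : inX K x -> pathlen K a b L ->
  Dhat dh x b <= Dhat dh x a + 2 * C * L.
Proof.
  intros Hx. induction 1 as [a Ha | a y b s L Fs Ns Ha Hy Sa Sy _ IH]; [lra|].
  pose proof (Dhat_step x s a y Hx Fs Ns Ha Hy Sa Sy). lra.
Qed.

End Lipschitz.

Lemma inf_exists (E : R -> Prop) :
  (exists L, E L) -> (forall L, E L -> 0 <= L) -> exists m, is_inf E m.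
Proof.
  intros [L0 HL0] Hpos.
  destruct (completeness (fun r => E (- r))) as [l [Hub Hleast]].
  - exists 0. intros r Hr. apply Hpos in Hr. lra.
  - exists (- L0). rewrite Ropp_involutive; exact HL0.
  - exists (- l). split.
    + intros r Hr. assert (- r <= l) by (apply Hub; rewrite Ropp_involutive; exact Hr). lra.
    + intros b Hb. assert (l <= - b) by (apply Hleast; intros r Hr; apply Hb in Hr; lra). lra.
Qed.

Section PathMetric.
Context {V : Type} (K : SimplicialComplex V).

Lemma dX_Some x y r : dX K x y = Some r -> is_inf (pathlen K x y) r.
Proof.
  unfold dX. destruct excluded_middle_informative as [Hex|]; [|discriminate].
  intros [= <-]. apply epsilon_spec, inf_exists; [exact Hex|].
  intros L HL; eapply path_nonneg; eassumption.
Qed.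

Lemma dX_None x y L : dX K x y = None -> ~ pathlen K x y L.
Proof.
  unfold dX. destruct excluded_middle_informative as [|Hno]; [discriminate|].
  intros _ HL; apply Hno; exists L; exact HL.
Qed.

End PathMetric.

Section TildeMetric.
Context {V : Type} (K : SimplicialComplex V) (dh : V -> V -> R) (C : R).
Hypothesis Hdh : is_metric_on (fun _ : V => True) dh.
Hypothesis HC : 0 < C.
Hypothesis Hlip : forall u v n, dG_is K u v n -> dh u v <= C * INR n.
Implicit Types (x y z : V -> R).
Local Notation dt := (dtilde K dh C).

Lemma dtilde_le_Dhat x y : dt x y <= Dhat dh x y.
Proof. unfold dtilde. destruct (dX K x y); [apply Rmin_l | lra]. Qed.

Lemma dtilde_le_path x y L : pathlen K x y L -> dt x y <= 3 * C * L.
Proof.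
  intros HL. unfold dtilde. destruct (dX K x y) as [r|] eqn:E.
  - apply dX_Some in E as [Hlow _]. eapply Rle_trans; [apply Rmin_r|].
    apply Rmult_le_compat_l; [lra | apply Hlow, HL].
  - exfalso; exact (dX_None K x y L E HL).
Qed.

Lemma dtilde_glb x y m : m <= Dhat dh x y ->
  (forall L, pathlen K x y L -> m <= 3 * C * L) -> m <= dt x y.
Proof.
  intros HD HP. unfold dtilde. destruct (dX K x y) as [r|] eqn:E; [|exact HD].
  apply dX_Some in E as [_ Hgreatest]. apply Rmin_glb; [exact HD|].
  assert (Hr : m / (3 * C) <= r).
  { apply Hgreatest. intros L HL. specialize (HP L HL).
    apply Rmult_le_reg_l with (3 * C); [lra|].
    replace (3 * C * (m / (3 * C))) with m by (field; lra). exact HP. }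
  replace m with (3 * C * (m / (3 * C))) by (field; lra).
  apply Rmult_le_compat_l; [lra | exact Hr].
Qed.

Lemma dtilde_nonneg x y : inX K x -> inX K y -> 0 <= dt x y.
Proof.
  intros Hx Hy. apply dtilde_glb; [exact (Dhat_nonneg dh Hdh K x y Hx Hy)|].
  intros L HL. pose proof (path_nonneg K x y L HL). nra.
Qed.

Lemma dtilde_self x : inX K x -> dt x x = 0.
Proof.
  intros Hx. apply Rle_antisym; [|exact (dtilde_nonneg x x Hx Hx)].
  rewrite <- (Rmult_0_r (3 * C)). apply dtilde_le_path. constructor; exact Hx.
Qed.

(* Distinct points are at positive distance: D̂ separates points, and a
   coordinate in which they differ bounds every path length from below. *)
Lemma dtilde_pos x y : inX K x -> inX K y -> x <> y -> 0 < dt x y.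
Proof.
  intros Hx Hy Hne.
  assert (Hw : exists w, x w <> y w).
  { apply NNPP; intros Hall; apply Hne, functional_extensionality; intros w.
    apply NNPP; intros Hxy; apply Hall; exists w; exact Hxy. }
  destruct Hw as [w Hw].
  assert (Hdelta : 0 < Rabs (x w - y w)) by (apply Rabs_pos_lt; lra).
  pose proof (Dhat_pos dh Hdh K x y Hx Hy Hne) as HD.
  apply Rlt_le_trans with (Rmin (Dhat dh x y) (3 * C * Rabs (x w - y w))).
  - apply Rmin_glb_lt; [exact HD | apply Rmult_lt_0_compat; lra].
  - apply dtilde_glb; [apply Rmin_l|]. intros L HL.
    eapply Rle_trans; [apply Rmin_r|]. apply Rmult_le_compat_l; [lra|].
    exact (path_coord K x y L w HL).
Qed.

Lemma dtilde_zero x y : inX K x -> inX K y -> (dt x y = 0 <-> x = y).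
Proof.
  intros Hx Hy. split.
  - intros H0. apply NNPP; intros Hne. pose proof (dtilde_pos x y Hx Hy Hne). lra.
  - intros <-. exact (dtilde_self x Hx).
Qed.

Lemma dtilde_sym x y : inX K x -> inX K y -> dt x y = dt y x.
Proof.
  (* each value is a lower bound for the data defining the other one *)
  assert (Hle : forall x y, inX K x -> inX K y -> dt y x <= dt x y).
  { intros a b Ha Hb. apply dtilde_glb.
    - rewrite (Dhat_sym dh Hdh K a b Ha Hb). apply dtilde_le_Dhat.
    - intros L HL. apply dtilde_le_path, path_rev, HL. }
  intros Hx Hy. apply Rle_antisym; apply Hle; assumption.
Qed.

(* Triangle inequality: apply the greatest-lower-bound property to d̃(x,y)
   and then to d̃(y,z); the four resulting cases are the triangle inequality
   for D̂, the Lipschitz bound for D̂ along paths (twice), and concatenation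
   of paths. *)
Lemma dtilde_triangle x y z : inX K x -> inX K y -> inX K z ->
  dt x z <= dt x y + dt y z.
Proof.
  intros Hx Hy Hz.
  assert (Hviaxy : dt x z - Dhat dh x y <= dt y z).
  { apply dtilde_glb.
    - pose proof (Dhat_triangle dh Hdh K x y z Hx Hy Hz). pose proof (dtilde_le_Dhat x z). lra.
    - intros L HL. pose proof (Dhat_path K dh C Hdh HC Hlip x y z L Hx HL).
      pose proof (dtilde_le_Dhat x z). pose proof (path_nonneg K y z L HL). nra. }
  assert (Hpathxy : forall L, pathlen K x y L -> dt x z - 3 * C * L <= dt y z).
  { intros L HL. apply dtilde_glb.
    - pose proof (Dhat_path K dh C Hdh HC Hlip z y x L Hz (path_rev K x y L HL)).
      rewrite (Dhat_sym dh Hdh K z x), (Dhat_sym dh Hdh K z y) in * by assumption.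
      pose proof (dtilde_le_Dhat x z). pose proof (path_nonneg K x y L HL). nra.
    - intros L' HL'. pose proof (dtilde_le_path x z (L + L') (path_app K x y z L L' HL HL')).
      lra. }
  assert (dt x z - dt y z <= dt x y).
  { apply dtilde_glb; [lra|]. intros L HL. specialize (Hpathxy L HL). lra. }
  lra.
Qed.

(* For disjoint supports every path has length ≥ 1, and then
   D̂(x,y) ≤ D̂(x,x) + 2CL ≤ C + 2CL ≤ 3CL, so the minimum is D̂(x,y). *)
Lemma dtilde_disjoint x y : inX K x -> inX K y -> (forall u, x u <> 0 -> y u = 0) ->
  dt x y = Dhat dh x y.
Proof.
  intros Hx Hy Hdisj. apply Rle_antisym; [apply dtilde_le_Dhat|].
  apply dtilde_glb; [lra|]. intros L HL.
  pose proof (Dhat_path K dh C Hdh HC Hlip x x y L Hx HL).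
  pose proof (Dhat_self_le K dh C Hdh HC Hlip x Hx).
  pose proof (path_disjoint K x y L HL Hdisj). nra.
Qed.

Lemma dtilde_vertex u v : dt (vertex_pt u) (vertex_pt v) = dh u v.
Proof.
  destruct (classic (u = v)) as [<-|Hne].
  - rewrite (dtilde_self _ (vertex_inX K u)). symmetry.
    exact (proj2 (proj1 (proj2 Hdh) u u I I) eq_refl).
  - assert (Hdisj : forall w, vertex_pt u w <> 0 -> vertex_pt v w = 0).
    { intros w. unfold vertex_pt.
      destruct excluded_middle_informative as [->|]; [|lra].
      destruct excluded_middle_informative; [congruence | reflexivity]. }
    rewrite (dtilde_disjoint _ _ (vertex_inX K u) (vertex_inX K v) Hdisj).
    rewrite (Dhat_eq dh [u; v]).
    + unfold dsum, vertex_pt. rewrite !sumL_cons, !sumL_nil.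
      repeat destruct excluded_middle_informative; try congruence; ring.
    + constructor; [intros [E|[]]; congruence | constructor; [intros [] | constructor]].
    + intros w Hw. unfold vertex_pt in Hw.
      destruct excluded_middle_informative; [left; congruence | lra].
    + intros w Hw. unfold vertex_pt in Hw.
      destruct excluded_middle_informative; [right; left; congruence | lra].
Qed.

End TildeMetric.

Theorem mainTheorem6 (V : Type) (K : SimplicialComplex V)
  (dh : V -> V -> R) (C : R)
  (Hdh : is_metric_on (fun _ : V => True) dh)
  (HC : 0 < C)
  (Hlip : forall u v n, dG_is K u v n -> dh u v <= C * INR n) :
  is_metric_on (inX K) (dtilde K dh C) /\
  (forall x y, inX K x -> inX K y ->
     (forall u, x u <> 0 -> y u = 0) ->
     dtilde K dh C x y = Dhat dh x y) /\
  (forall u v, dtilde K dh C (vertex_pt u) (vertex_pt v) = dh u v).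
Proof.
  split; [|split].
  - split; [|split; [|split]].
    + exact (dtilde_nonneg K dh C Hdh HC).
    + exact (dtilde_zero K dh C Hdh HC).
    + exact (dtilde_sym K dh C Hdh HC).
    + exact (dtilde_triangle K dh C Hdh HC Hlip).
  - exact (dtilde_disjoint K dh C Hdh HC Hlip).
  - exact (dtilde_vertex K dh C Hdh HC Hlip).
Qed.
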